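(* Let $f:\mathbb{R}^n\times\mathbb{R}^m\to\mathbb{R}$ be twice continuously differentiable, convex in $x$ and concave in $y$. For $\nu>0$ let $z^*(\nu)$ be the saddle point of $\min_x\max_y f_\nu(x,y)$, $f_\nu(x,y)=f(x,y)+\frac{\nu}{2}\|x\|^2-\frac{\nu}{2}\|y\|^2$, and suppose there exist $C,\delta_0>0$ and $\theta\in(0,1]$ with $\|z^*(\nu_1)-z^*(\nu_2)\|\le C|\nu_1-\nu_2|^\theta$ for all $0<\nu_1,\nu_2<\delta_0$. Then for any sequence $\{\nu_k\}$ of positive numbers with $\lim_{k\to\infty}\nu_k=0$, the sequence $\{z^*(\nu_k)\}$ has a unique limit point $z^*=\lim_{k\to\infty}z^*(\nu_k)$, and $z^*$ is a saddle point of $\min_{x}\max_{y}f(x,y)$. *)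

From HB Require Import structures.
From mathcomp Require Import all_boot all_order all_algebra.
From mathcomp Require Import all_classical all_reals all_analysis.
Set Implicit Arguments. Unset Strict Implicit. Unset Printing Implicit Defensive.
Import Order.TTheory GRing.Theory Num.Theory.
Import numFieldNormedType.Exports.
Local Open Scope ring_scope.
Local Open Scope classical_set_scope.

Definition sqnorm (R : realType) (n : nat) (x : 'rV[R]_n) : R :=
  \sum_(i < n) x ord0 i ^+ 2.

Definition enorm2 (R : realType) (n m : nat) (z : 'rV[R]_n * 'rV[R]_m) : R :=
  Num.sqrt (sqnorm z.1 + sqnorm z.2).

(* Twice continuously differentiable on R^n x R^m, stated with directional
   derivatives: first and second directional derivatives exist everywhere
   and the second ones are continuous (taking coordinate directions, this is
   the usual "all second partials exist and are continuous" definition of C^2). *)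
Definition C2 (R : realType) (n m : nat) (g : 'rV[R]_n * 'rV[R]_m -> R) : Prop :=
  forall v w : 'rV[R]_n * 'rV[R]_m,
    (forall p, derivable g p v) /\
    (forall p, derivable (fun q => derive g q v) p w) /\
    continuous (fun p => derive (fun q => derive g q v) p w).

Definition convex_in_x (R : realType) (n m : nat) (f : 'rV[R]_n -> 'rV[R]_m -> R) :=
  forall (y : 'rV[R]_m) (x1 x2 : 'rV[R]_n) (t : R), 0 <= t -> t <= 1 ->
    f ((1 - t) *: x1 + t *: x2) y <= (1 - t) * f x1 y + t * f x2 y.

Definition concave_in_y (R : realType) (n m : nat) (f : 'rV[R]_n -> 'rV[R]_m -> R) :=
  forall (x : 'rV[R]_n) (y1 y2 : 'rV[R]_m) (t : R), 0 <= t -> t <= 1 ->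
    (1 - t) * f x y1 + t * f x y2 <= f x ((1 - t) *: y1 + t *: y2).

Definition saddle_point (R : realType) (n m : nat) (f : 'rV[R]_n -> 'rV[R]_m -> R)
  (z : 'rV[R]_n * 'rV[R]_m) : Prop :=
  forall (x : 'rV[R]_n) (y : 'rV[R]_m), f z.1 y <= f z.1 z.2 /\ f z.1 z.2 <= f x z.2.

Definition freg (R : realType) (n m : nat) (f : 'rV[R]_n -> 'rV[R]_m -> R) (nu : R)
  (x : 'rV[R]_n) (y : 'rV[R]_m) : R :=
  f x y + nu / 2 * sqnorm x - nu / 2 * sqnorm y.

From HB Require Import structures.
From mathcomp Require Import all_boot all_order all_algebra.
From mathcomp Require Import all_classical all_reals all_analysis.
From mathcomp Require Import ring lra.
Import Order.TTheory GRing.Theory Num.Theory.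
Import numFieldNormedType.Exports.
Local Open Scope ring_scope.
Local Open Scope classical_set_scope.

(* Write z_nu = (x_nu, y_nu) for the saddle point of f_nu.  The Hoelder estimate
   makes nu |-> z_nu Cauchy as nu -> 0+, so it has a limit z = (x, y) at 0 from
   the right, and z_(nu_k) -> z along every positive null sequence.  For nu > 0
   the two saddle inequalities of f_nu combine, after dropping the nonnegative
   terms nu/2 |x_nu|^2 and nu/2 |y_nu|^2, into
     f (x_nu, v) - nu/2 |v|^2 <= f (u, y_nu) + nu/2 |u|^2   for all u, v,
   and letting nu -> 0+ gives f (x, v) <= f (u, y), i.e. z is a saddle point of f.
   The passage to the limit only needs f to be continuous in each variable, which
   follows from convexity: a convex function is bounded above on the cube
   x0 + [-1, 1]^n (the unit ball of the max norm carried by matrices) by its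
   values at the vertices, and Jensen's inequality turns this bound into the
   estimate |phi (x0 + d) - phi x0| <= r (cube_max - phi x0) for |d| <= r <= 1. *)

Lemma mx_entry_le_norm {R : realDomainType} {k l : nat} (A : 'M[R]_(k, l)) i j :
  `|A i j| <= `|A|.
Proof.
rewrite [`|A|]/Num.Def.normr /= mx_normrE.
exact: (le_bigmax _ (fun ij : 'I_k * 'I_l => `|A ij.1 ij.2|) (i, j)).
Qed.

Section ConvexContinuous.
Variables (R : realType) (n : nat) (phi : 'rV[R]_n -> R).
Hypothesis phi_convex : forall (x1 x2 : 'rV[R]_n) (t : R), 0 <= t -> t <= 1 ->
  phi ((1 - t) *: x1 + t *: x2) <= (1 - t) * phi x1 + t * phi x2.

Lemma convex_le_max (x1 x2 : 'rV[R]_n) (t : R) : 0 <= t -> t <= 1 ->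
  phi ((1 - t) *: x1 + t *: x2) <= Num.max (phi x1) (phi x2).
Proof.
move=> t0 t1; have := phi_convex x1 x2 t t0 t1.
have t1' : 0 <= 1 - t by lra.
have [h|/ltW h] := leP (phi x1) (phi x2).
  by have := ler_wpM2l t1' h; lra.
by have := ler_wpM2l t0 h; lra.
Qed.

Variable x0 : 'rV[R]_n.

Definition cube_vertex (s : {ffun 'I_n -> bool}) : 'rV[R]_n :=
  x0 + \row_i (if s i then 1 else -1).

Definition cube_max : R :=
  \big[Num.max/phi x0]_(s : {ffun 'I_n -> bool}) phi (cube_vertex s).

Lemma le_cube_max_rec (k : nat) (d : 'rV[R]_n) :
  (forall i, `|d ord0 i| <= 1) ->
  (forall i : 'I_n, (k <= i)%N -> `|d ord0 i| = 1) ->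
  phi (x0 + d) <= cube_max.
Proof.
(* Moving the k-th coordinate of d to -1 and to 1 writes x0 + d as a convex
   combination of two points to which the induction hypothesis applies. *)
elim: k d => [|k IH] d d_le1 d_eq1.
  pose s := [ffun i => d ord0 i == 1].
  suff -> : x0 + d = cube_vertex s by exact: le_bigmax.
  congr (_ + _); apply/rowP => i; rewrite !mxE ffunE.
  have [//|/eqP d_neq1] := eqVneq (d ord0 i) 1.
  by move: (d_eq1 i isT) => /eqP; rewrite eqr_norml ler01 andbT => /orP[]/eqP.
have [k_lt_n|n_le_k] := ltnP k n; last first.
  apply: IH => // i k_le_i.
  by move: (leq_trans n_le_k k_le_i); rewrite leqNgt ltn_ord.
pose i0 : 'I_n := Ordinal k_lt_n.
pose a := d ord0 i0.
pose move_to c : 'rV[R]_n := d + (c - a) *: delta_mx ord0 i0.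
have move_to_le c : `|c| = 1 -> phi (x0 + move_to c) <= cube_max.
  move=> c1; apply: IH => i; rewrite /move_to /a !mxE eqxx /=.
    by have [->|_] := eqVneq i i0; rewrite ?mulr1 ?subrKC ?c1 // mulr0 addr0.
  have [->|ne] := eqVneq i i0; first by rewrite mulr1 subrKC.
  rewrite mulr0 addr0 => k_le_i; apply: d_eq1; rewrite ltn_neqAle k_le_i andbT.
  by apply: contra ne => /eqP k_eq_i; apply/eqP/val_inj.
pose t := (a + 1) / 2.
have [t0 t1] : 0 <= t /\ t <= 1.
  by move: (d_le1 i0); rewrite ler_norml /t -/a => /andP[? ?]; split; lra.
have -> : x0 + d = (1 - t) *: (x0 + move_to (-1)) + t *: (x0 + move_to 1).
  by apply/rowP => j; rewrite !mxE /t; field.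
apply: le_trans (convex_le_max _ _ _ t0 t1) _.
by rewrite ge_max !move_to_le ?normrN ?normr1.
Qed.

Lemma le_cube_max (d : 'rV[R]_n) : `|d| <= 1 -> phi (x0 + d) <= cube_max.
Proof.
move=> d_le1; apply: (le_cube_max_rec n) => [i|i]; last by rewrite leqNgt ltn_ord.
exact: le_trans (mx_entry_le_norm d ord0 i) d_le1.
Qed.

Lemma convex_ball_le (d : 'rV[R]_n) (r : R) : 0 < r -> r <= 1 -> `|d| <= r ->
  phi (x0 + d) <= (1 - r) * phi x0 + r * cube_max.
Proof.
move=> r0 r1 d_le_r.
have q_le : phi (x0 + r^-1 *: d) <= cube_max.
  by apply: le_cube_max; rewrite normrZ gtr0_norm ?invr_gt0 // ler_pdivrMl // mulr1.
have -> : x0 + d = (1 - r) *: x0 + r *: (x0 + r^-1 *: d).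
  by rewrite scalerDr scalerA mulfV ?gt_eqF // scale1r addrA -scalerDl subrK scale1r.
have := phi_convex x0 (x0 + r^-1 *: d) r (ltW r0) r1.
have := ler_wpM2l (ltW r0) q_le.
lra.
Qed.

Lemma convex_ball_dist (d : 'rV[R]_n) (r : R) : 0 < r -> r <= 1 -> `|d| <= r ->
  `|phi (x0 + d) - phi x0| <= r * (cube_max - phi x0).
Proof.
move=> r0 r1 d_le_r.
have above := convex_ball_le _ _ r0 r1 d_le_r.
have opposite : phi (x0 - d) <= (1 - r) * phi x0 + r * cube_max.
  by apply: convex_ball_le; rewrite ?normrN.
have midpoint : phi x0 <= (1 - 2^-1) * phi (x0 + d) + 2^-1 * phi (x0 - d).
  have {1}-> : x0 = (1 - 2^-1) *: (x0 + d) + 2^-1 *: (x0 - d) :> 'rV[R]_n.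
    by apply/rowP => j; rewrite !mxE; field.
  by apply: phi_convex; lra.
by rewrite ler_norml; apply/andP; split; lra.
Qed.

Lemma convex_continuous_at : {for x0, continuous phi}.
Proof.
apply/(@cvgrPdist_le _ _ _ _ (nbhs_filter x0)) => e e0.
pose B := `|cube_max - phi x0| + 1.
have B0 : 0 < B by rewrite ltr_pwDr.
pose r := Num.min 1 (e / B).
have r0 : 0 < r by rewrite lt_min ltr01 divr_gt0.
have r1 : r <= 1 by rewrite ge_min lexx.
have rB_le_e : r * B <= e by rewrite -ler_pdivlMr // ge_min lexx orbT.
apply: filterS (near_ball x0 _ r0) => x; rewrite -ball_normE /= distrC => x_near.
rewrite distrC; have -> : x = x0 + (x - x0) by rewrite subrKC.
apply: le_trans (convex_ball_dist _ _ r0 r1 (ltW x_near)) (le_trans _ rB_le_e).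
by rewrite ler_pM2l // /B; have := ler_norm (cube_max - phi x0); lra.
Qed.

End ConvexContinuous.

Lemma convex_continuous {R : realType} {n : nat} (phi : 'rV[R]_n -> R) :
  (forall (x1 x2 : 'rV[R]_n) (t : R), 0 <= t -> t <= 1 ->
     phi ((1 - t) *: x1 + t *: x2) <= (1 - t) * phi x1 + t * phi x2) ->
  continuous phi.
Proof. by move=> phi_convex x; exact: convex_continuous_at. Qed.

Lemma concave_continuous {R : realType} {n : nat} (phi : 'rV[R]_n -> R) :
  (forall (x1 x2 : 'rV[R]_n) (t : R), 0 <= t -> t <= 1 ->
     (1 - t) * phi x1 + t * phi x2 <= phi ((1 - t) *: x1 + t *: x2)) ->
  continuous phi.
Proof.
move=> phi_concave x.
have negphi_cont : continuous (fun v => - phi v).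
  apply: convex_continuous => x1 x2 t t0 t1.
  by have := phi_concave x1 x2 t t0 t1; lra.
have -> : phi = fun v => - - phi v by apply/funext => v; rewrite opprK.
exact: continuousN (negphi_cont x).
Qed.

Lemma sqnorm_ge0 {R : realType} {n : nat} (x : 'rV[R]_n) : 0 <= sqnorm x.
Proof. by apply: sumr_ge0 => i _; apply: sqr_ge0. Qed.

Lemma norm_le_sqrt_sqnorm {R : realType} {n : nat} (x : 'rV[R]_n) :
  `|x| <= Num.sqrt (sqnorm x).
Proof.
rewrite [`|x|]/Num.Def.normr /= mx_normrE.
apply: bigmax_le => [|[i j] _ /=]; first exact: sqrtr_ge0.
rewrite (ord1 i) -sqrtr_sqr ler_sqrt ?sqnorm_ge0 //.
rewrite /sqnorm (bigD1 j) //= lerDl.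
by apply: sumr_ge0 => k _; apply: sqr_ge0.
Qed.

Lemma norm_fst_le_enorm2 {R : realType} {n m : nat} (z : 'rV[R]_n * 'rV[R]_m) :
  `|z.1| <= enorm2 z.
Proof.
apply: le_trans (norm_le_sqrt_sqnorm _) _.
by rewrite ler_sqrt ?addr_ge0 ?sqnorm_ge0 // lerDl sqnorm_ge0.
Qed.

Lemma norm_snd_le_enorm2 {R : realType} {n m : nat} (z : 'rV[R]_n * 'rV[R]_m) :
  `|z.2| <= enorm2 z.
Proof.
apply: le_trans (norm_le_sqrt_sqnorm _) _.
by rewrite ler_sqrt ?addr_ge0 ?sqnorm_ge0 // lerDr sqnorm_ge0.
Qed.

Lemma holder_cauchy_at_right0 {R : realType} {V : normedModType R}
    {g : R -> V} {C d0 th : R} :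
  0 <= C -> 0 < d0 -> 0 < th ->
  (forall a b, 0 < a -> a < d0 -> 0 < b -> b < d0 ->
     `|g a - g b| <= C * `|a - b| `^ th) ->
  cauchy (g a @[a --> 0^'+]).
Proof.
move=> C0 d00 th0 g_holder; apply: cauchy_exP => e e0.
have [eta [eta0 eta_d0 C_eta]] :
    exists eta, [/\ 0 < eta, eta < d0 & C * eta `^ th < e].
  have Cpow : C * a `^ th @[a --> 0^'+] --> 0.
    rewrite -[X in _ --> X](mulr0 C).
    by apply: cvgM; [exact: cvg_cst | exact: powR_cvg0].
  apply: (@filter_ex _ (0 : R)^'+); near=> a; split.
  - by near: a; exact: nbhs_right_gt.
  - by near: a; exact: nbhs_right_lt.
  - by near: a; exact: cvgr_lt Cpow _ e0.
exists (g eta); suff : \forall b \near 0^'+, ball (g eta) e (g b) by [].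
near=> b; rewrite -ball_normE /=.
have b0 : 0 < b by near: b; exact: nbhs_right_gt.
have b_eta : b < eta by near: b; exact: nbhs_right_lt.
apply: le_lt_trans (g_holder _ _ eta0 eta_d0 b0 (lt_trans b_eta eta_d0)) _.
apply: le_lt_trans (ler_wpM2l C0 _) C_eta.
apply: ge0_ler_powR; rewrite ?nnegrE ?normr_ge0 ?(ltW eta0) ?(ltW th0) //.
by rewrite ger0_norm; lra.
Unshelve. all: by end_near.
Qed.

Lemma cvg_to_at_right {R : realType} {T : Type} {F : set_system T} {FF : Filter F}
    (u : T -> R) (a : R) :
  (forall t, a < u t) -> u @ F --> a -> u @ F --> a^'+.
Proof.
move=> a_lt_u u_cvg A /u_cvg; rewrite !nbhs_simpl /=.
by apply: filterS => t /(_ (a_lt_u t)).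
Qed.

Section RegularizedSaddlePoint.
Variables (R : realType) (n m : nat) (f : 'rV[R]_n -> 'rV[R]_m -> R).

Lemma freg_saddle_point_le (nu : R) (z : 'rV[R]_n * 'rV[R]_m) x y :
  0 <= nu -> saddle_point (freg f nu) z ->
  f z.1 y - nu / 2 * sqnorm y <= f x z.2 + nu / 2 * sqnorm x.
Proof.
move=> nu0 /(_ x y) []; rewrite /freg.
have nu2 : 0 <= nu / 2 by rewrite divr_ge0.
have := mulr_ge0 nu2 (sqnorm_ge0 z.1); have := mulr_ge0 nu2 (sqnorm_ge0 z.2).
lra.
Qed.

Lemma saddle_point_lim_freg (zs : R -> 'rV[R]_n * 'rV[R]_m) z :
  (forall y, continuous (f^~ y)) -> (forall x, continuous (f x)) ->
  (forall nu, 0 < nu -> saddle_point (freg f nu) (zs nu)) ->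
  zs nu @[nu --> 0^'+] --> z -> saddle_point f z.
Proof.
move=> fx_cont fy_cont zs_saddle zs_cvg.
suff cross x y : f z.1 y <= f x z.2 by move=> x y; split; apply: cross.
have penalty_cvg (c : R) : nu / 2 * c @[nu --> 0^'+] --> 0.
  apply: cvg_at_right_filter.
  rewrite -[X in _ --> X](mul0r c) -[X in _ --> X * c](mul0r 2^-1).
  by apply: cvgMl; apply: cvgMl; exact: cvg_id.
have lhs_cvg : f (zs nu).1 y - nu / 2 * sqnorm y @[nu --> 0^'+] --> f z.1 y - 0.
  apply: cvgB (penalty_cvg _).
  exact: cvg_comp _ _ (cvg_comp _ _ zs_cvg cvg_fst) (fx_cont y z.1).
have rhs_cvg : f x (zs nu).2 + nu / 2 * sqnorm x @[nu --> 0^'+] --> f x z.2 + 0.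
  apply: cvgD (penalty_cvg _).
  exact: cvg_comp _ _ (cvg_comp _ _ zs_cvg cvg_snd) (fy_cont x z.2).
rewrite -[f z.1 y]subr0 -[f x z.2]addr0; apply: ler_cvg_to lhs_cvg rhs_cvg _.
near=> nu; apply: freg_saddle_point_le; last apply: zs_saddle.
  by apply: ltW; near: nu; exact: nbhs_right_gt.
by near: nu; exact: nbhs_right_gt.
Unshelve. all: by end_near.
Qed.

End RegularizedSaddlePoint.

Theorem lemma5p4 (R : realType) (n m : nat) (f : 'rV[R]_n -> 'rV[R]_m -> R)
  (zs : R -> 'rV[R]_n * 'rV[R]_m) :
  C2 (fun z => f z.1 z.2) ->
  convex_in_x f -> concave_in_y f ->
  (forall nu : R, 0 < nu -> saddle_point (freg f nu) (zs nu)) ->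
  (exists (C d0 th : R), [/\ 0 < C, 0 < d0, 0 < th, th <= 1 &
     forall nu1 nu2 : R, 0 < nu1 -> nu1 < d0 -> 0 < nu2 -> nu2 < d0 ->
       enorm2 (zs nu1 - zs nu2) <= C * (`|nu1 - nu2| `^ th)]) ->
  forall nuk : nat -> R, (forall k, 0 < nuk k) -> nuk @ \oo --> 0 ->
  exists zstar : 'rV[R]_n * 'rV[R]_m,
    (zs \o nuk) @ \oo --> zstar /\ saddle_point f zstar.
Proof.
move=> _ f_convex f_concave zs_saddle [C [d0 [th [C0 d00 th0 _ zs_holder]]]].
move=> nuk nuk_gt0 nuk_cvg.
have x_cvg : cvg ((zs nu).1 @[nu --> 0^'+]).
  apply: cauchy_cvg.
  apply: (holder_cauchy_at_right0 (ltW C0) d00 th0) => a b a0 ad0 b0 bd0.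
  exact: le_trans (norm_fst_le_enorm2 _) (zs_holder _ _ a0 ad0 b0 bd0).
have y_cvg : cvg ((zs nu).2 @[nu --> 0^'+]).
  apply: cauchy_cvg.
  apply: (holder_cauchy_at_right0 (ltW C0) d00 th0) => a b a0 ad0 b0 bd0.
  exact: le_trans (norm_snd_le_enorm2 _) (zs_holder _ _ a0 ad0 b0 bd0).
pose zstar := (lim ((zs nu).1 @[nu --> 0^'+]), lim ((zs nu).2 @[nu --> 0^'+])).
have zs_cvg : zs nu @[nu --> 0^'+] --> zstar.
  have -> : zs = fun nu => ((zs nu).1, (zs nu).2).
    by apply/funext => nu; case: (zs nu).
  exact: cvg_pair x_cvg y_cvg.
exists zstar; split.
  apply: cvg_comp zs_cvg; exact: cvg_to_at_right nuk_gt0 nuk_cvg.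
apply: saddle_point_lim_freg zs_saddle zs_cvg => [y|x].
  exact: convex_continuous (f_convex y).
exact: concave_continuous (f_concave x).
Qed.
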